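(* Let $u=u'u''$ be the product of two 5-complex numbers, and denote the parameters of $u'$, $u''$ by primes and double primes respectively. Then $v_+=v_+'v_+''$; $\rho_k=\rho_k'\rho_k''$ and $\phi_k=\phi_k'+\phi_k''$ (modulo $2\pi$) for $k=1,2$; $v_k=v_k'v_k''-\tilde v_k'\tilde v_k''$ and $\tilde v_k=v_k'\tilde v_k''+\tilde v_k'v_k''$ for $k=1,2$; $\tan\theta_+=\frac{1}{\sqrt2}\tan\theta_+'\tan\theta_+''$; $\tan\psi_1=\tan\psi_1'\tan\psi_1''$; and $\rho=\rho'\rho''$.
   Context: A 5-complex number is $u=x_0+h_1x_1+h_2x_2+h_3x_3+h_4x_4$ with real $x_j$, with componentwise addition and the commutative associative bilinear multiplication determined by $h_jh_k=h_{(j+k)\bmod 5}$, $h_0=1$. Its canonical variables are $v_+=\sum_{j=0}^4 x_j$, and for $k=1,2$: $v_k=\sum_{j=0}^4 x_j\cos(2\pi kj/5)$, $\tilde v_k=\sum_{j=0}^4x_j\sin(2\pi kj/5)$. For $k=1,2$ define $\rho_k\ge 0$ and $\phi_k\in[0,2\pi)$ by $\rho_k^2=v_k^2+\tilde v_k^2$, $\cos\phi_k=v_k/\rho_k$, $\sin\phi_k=\tilde v_k/\rho_k$. The planar angle $\psi_1\in[0,\pi/2]$ is given by $\tan\psi_1=\rho_1/\rho_2$, the polar angle $\theta_+\in[0,\pi]$ by $\tan\theta_+=\sqrt2\rho_1/v_+$, and the amplitude by $\rho=(v_+\rho_1^2\rho_2^2)^{1/5}$ (real fifth root). *)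

From Stdlib Require Import Reals Lra.
Open Scope R_scope.

(** A 5-complex number u = x0 + h1 x1 + h2 x2 + h3 x3 + h4 x4. *)
Record C5 := mkC5 { x0 : R; x1 : R; x2 : R; x3 : R; x4 : R }.

Definition comp (u : C5) (j : nat) : R :=
  match j with
  | 0%nat => x0 u | 1%nat => x1 u | 2%nat => x2 u | 3%nat => x3 u
  | 4%nat => x4 u | _ => 0
  end.

(** Bilinear multiplication determined by h_j h_k = h_{(j+k) mod 5}:
    the l-th component of u*w is the sum of x_j y_k over j+k = l (mod 5). *)
Definition mulc (l : nat) (u w : C5) : R :=
  sum_f_R0 (fun j => sum_f_R0 (fun k =>
     if Nat.eqb ((j + k) mod 5) l then comp u j * comp w k else 0) 4) 4.

Definition C5mul (u w : C5) : C5 :=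
  mkC5 (mulc 0 u w) (mulc 1 u w) (mulc 2 u w) (mulc 3 u w) (mulc 4 u w).

Definition vplus (u : C5) : R := sum_f_R0 (fun j => comp u j) 4.
Definition vk (k : nat) (u : C5) : R :=
  sum_f_R0 (fun j => comp u j * cos (2 * PI * INR k * INR j / 5)) 4.
Definition vtk (k : nat) (u : C5) : R :=
  sum_f_R0 (fun j => comp u j * sin (2 * PI * INR k * INR j / 5)) 4.

Definition rhok (k : nat) (u : C5) : R := sqrt (vk k u ^ 2 + vtk k u ^ 2).

(** phi_k in [0, 2 pi) with cos phi_k = v_k/rho_k, sin phi_k = vt_k/rho_k
    (only meaningful when rho_k <> 0; set to 0 otherwise). *)
Definition phik (k : nat) (u : C5) : R :=
  let r := rhok k u in
  if Req_EM_T r 0 then 0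
  else if Rle_dec 0 (vtk k u) then acos (vk k u / r)
  else 2 * PI - acos (vk k u / r).

Definition psi1 (u : C5) : R :=
  if Req_EM_T (rhok 2 u) 0 then PI / 2 else atan (rhok 1 u / rhok 2 u).

(** theta_+ in [0, pi] with tan theta_+ = sqrt 2 * rho_1 / v_+
    (pi/2 when v_+ = 0). *)
Definition thetaplus (u : C5) : R :=
  let q := sqrt 2 * rhok 1 u / vplus u in
  if Req_EM_T (vplus u) 0 then PI / 2
  else if Rlt_dec 0 (vplus u) then atan q else PI + atan q.

Definition root5 (x : R) : R :=
  if Req_EM_T x 0 then 0
  else if Rlt_dec 0 x then Rpower x (1/5) else - Rpower (- x) (1/5).

Definition amp (u : C5) : R :=
  root5 (vplus u * rhok 1 u ^ 2 * rhok 2 u ^ 2).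

(* The maps u |-> v_+ and u |-> v_k + i vt_k send h_j to 1 and to the fifth
   root of unity exp(2 pi i k j / 5); since these respect h_j h_l = h_(j+l mod 5),
   they are ring homomorphisms from the 5-complex numbers to R and to C.  Hence
   v_+ and the complex number v_k + i vt_k are multiplicative, so their moduli
   rho_k multiply and their arguments phi_k add modulo 2 pi.  The polar and
   planar angles and the amplitude are built multiplicatively from these
   quantities (the real fifth root being multiplicative as well). *)
From Pilot Require Import Defs.
From Stdlib Require Import Reals ZArith Lra Lia.
Open Scope R_scope.

Definition dft_angle (k j : nat) : R := 2 * PI * INR k * INR j / 5.

Lemma vk_dft k u : vk k u = sum_f_R0 (fun j => Defs.comp u j * cos (dft_angle k j)) 4.
Proof. reflexivity. Qed.

Lemma vtk_dft k u : vtk k u = sum_f_R0 (fun j => Defs.comp u j * sin (dft_angle k j)) 4.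
Proof. reflexivity. Qed.

Lemma dft_angle_add k a b :
  dft_angle k a + dft_angle k b =
  dft_angle k ((a + b) mod 5) + 2 * INR (k * ((a + b) / 5)) * PI.
Proof.
  unfold dft_angle.
  assert (Hdiv : INR (a + b) = 5 * INR ((a + b) / 5) + INR ((a + b) mod 5)).
  { rewrite (Nat.div_mod (a + b) 5) at 1 by lia.
    rewrite plus_INR, mult_INR; simpl; ring. }
  rewrite plus_INR in Hdiv; rewrite mult_INR.
  replace (2 * PI * INR k * INR a / 5 + 2 * PI * INR k * INR b / 5)
    with (2 * PI * INR k * (INR a + INR b) / 5) by field.
  rewrite Hdiv; field.
Qed.

Lemma cos_dft_angle_mod k a b :
  cos (dft_angle k ((a + b) mod 5)) =
  cos (dft_angle k a) * cos (dft_angle k b) - sin (dft_angle k a) * sin (dft_angle k b).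
Proof. rewrite <- cos_plus, dft_angle_add, cos_period; reflexivity. Qed.

Lemma sin_dft_angle_mod k a b :
  sin (dft_angle k ((a + b) mod 5)) =
  cos (dft_angle k a) * sin (dft_angle k b) + sin (dft_angle k a) * cos (dft_angle k b).
Proof.
  rewrite <- (sin_period _ (k * ((a + b) / 5))), <- dft_angle_add, sin_plus; ring.
Qed.

Lemma sum_comp_C5mul (F : nat -> R) (Phi : nat -> nat -> R) u w :
  (forall a b, F ((a + b) mod 5)%nat = Phi a b) ->
  sum_f_R0 (fun l => Defs.comp (C5mul u w) l * F l) 4 =
  sum_f_R0 (fun a => sum_f_R0 (fun b => Defs.comp u a * Defs.comp w b * Phi a b) 4) 4.
Proof.
  intros HF.
  transitivity (sum_f_R0 (fun a => sum_f_R0 (fun b =>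
    Defs.comp u a * Defs.comp w b * F ((a + b) mod 5)%nat) 4) 4).
  - unfold C5mul, mulc; simpl; ring.
  - apply sum_eq; intros a _; apply sum_eq; intros b _; rewrite HF; reflexivity.
Qed.

Lemma vplus_mul u w : vplus (C5mul u w) = vplus u * vplus w.
Proof. unfold vplus, C5mul, mulc; simpl; ring. Qed.

Lemma vk_mul k u w : vk k (C5mul u w) = vk k u * vk k w - vtk k u * vtk k w.
Proof.
  rewrite !vk_dft, !vtk_dft.
  rewrite (sum_comp_C5mul (fun l => cos (dft_angle k l)) _ u w (cos_dft_angle_mod k)).
  simpl; ring.
Qed.

Lemma vtk_mul k u w : vtk k (C5mul u w) = vk k u * vtk k w + vtk k u * vk k w.
Proof.
  rewrite !vk_dft, !vtk_dft.
  rewrite (sum_comp_C5mul (fun l => sin (dft_angle k l)) _ u w (sin_dft_angle_mod k)).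
  simpl; ring.
Qed.

Lemma rhok_sqr k u : rhok k u ^ 2 = vk k u ^ 2 + vtk k u ^ 2.
Proof. apply pow2_sqrt; nra. Qed.

Lemma rhok_mul k u w : rhok k (C5mul u w) = rhok k u * rhok k w.
Proof.
  unfold rhok; rewrite vk_mul, vtk_mul, <- sqrt_mult by nra.
  f_equal; ring.
Qed.

Lemma polar_acos_cos_sin v t r :
  0 < r -> v ^ 2 + t ^ 2 = r ^ 2 ->
  let p := if Rle_dec 0 t then acos (v / r) else 2 * PI - acos (v / r) in
  cos p = v / r /\ sin p = t / r.
Proof.
  intros Hr Hvt p.
  assert (Hunit : (v / r) ^ 2 + (t / r) ^ 2 = 1).
  { replace ((v / r) ^ 2 + (t / r) ^ 2) with ((v ^ 2 + t ^ 2) / r ^ 2) by (field; lra).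
    rewrite Hvt; field; lra. }
  assert (Hx : -1 <= v / r <= 1) by (split; nra).
  assert (Hsqrt : sqrt (1 - (v / r)²) = Rabs (t / r)).
  { rewrite <- sqrt_Rsqr_abs; f_equal; unfold Rsqr; lra. }
  assert (Hinv : 0 < / r) by (apply Rinv_0_lt_compat; lra).
  unfold p; destruct (Rle_dec 0 t) as [Ht | Ht].
  - rewrite cos_acos, sin_acos, Hsqrt, Rabs_pos_eq by (unfold Rdiv; nra); auto.
  - rewrite cos_minus, sin_minus, cos_2PI, sin_2PI, cos_acos, sin_acos, Hsqrt,
      Rabs_left by (unfold Rdiv; nra).
    split; ring.
Qed.

Lemma phik_cos_sin k u :
  rhok k u <> 0 ->
  cos (phik k u) = vk k u / rhok k u /\ sin (phik k u) = vtk k u / rhok k u.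
Proof.
  intros Hr; unfold phik; cbv zeta.
  destruct (Req_EM_T (rhok k u) 0); [contradiction |].
  apply polar_acos_cos_sin.
  - pose proof (sqrt_pos (vk k u ^ 2 + vtk k u ^ 2)); unfold rhok in *; lra.
  - symmetry; apply rhok_sqr.
Qed.

Lemma angle_eq_mod_2PI a b :
  cos a = cos b -> sin a = sin b -> exists m : Z, a = b + 2 * PI * IZR m.
Proof.
  intros Hc Hs.
  assert (Hcos : cos (a - b) = 1).
  { rewrite cos_minus, <- Hc, <- Hs; pose proof (sin2_cos2 a); unfold Rsqr in *; lra. }
  assert (Hsin : sin ((a - b) / 2) = 0).
  { replace (a - b) with (2 * ((a - b) / 2)) in Hcos by field.
    rewrite cos_2a_sin in Hcos; nra. }
  destruct (sin_eq_0_0 _ Hsin) as [m Hm]; exists m; lra.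
Qed.

Lemma phik_mul k u w :
  rhok k u <> 0 -> rhok k w <> 0 ->
  exists m : Z, phik k (C5mul u w) = phik k u + phik k w + 2 * PI * IZR m.
Proof.
  intros Hu Hw.
  assert (Huw : rhok k (C5mul u w) <> 0)
    by (rewrite rhok_mul; apply Rmult_integral_contrapositive; tauto).
  destruct (phik_cos_sin k _ Huw) as [Hc Hs].
  destruct (phik_cos_sin k _ Hu) as [Hcu Hsu].
  destruct (phik_cos_sin k _ Hw) as [Hcw Hsw].
  apply angle_eq_mod_2PI.
  - rewrite Hc, cos_plus, Hcu, Hcw, Hsu, Hsw, vk_mul, rhok_mul; field; tauto.
  - rewrite Hs, sin_plus, Hcu, Hcw, Hsu, Hsw, vtk_mul, rhok_mul; field; tauto.
Qed.

Lemma tan_thetaplus u : vplus u <> 0 -> tan (thetaplus u) = sqrt 2 * rhok 1 u / vplus u.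
Proof.
  intros Hv; unfold thetaplus; cbv zeta.
  destruct (Req_EM_T (vplus u) 0); [contradiction |].
  destruct (Rlt_dec 0 (vplus u)); [apply tan_atan |].
  rewrite <- (tan_atan (sqrt 2 * rhok 1 u / vplus u)) at 2.
  unfold tan; rewrite Rplus_comm, neg_sin, neg_cos; unfold Rdiv; rewrite Rinv_opp; ring.
Qed.

Lemma tan_psi1 u : rhok 2 u <> 0 -> tan (psi1 u) = rhok 1 u / rhok 2 u.
Proof.
  intros Hr; unfold psi1.
  destruct (Req_EM_T (rhok 2 u) 0); [contradiction | apply tan_atan].
Qed.

Lemma tan_thetaplus_mul u w :
  vplus u <> 0 -> vplus w <> 0 ->
  tan (thetaplus (C5mul u w)) = / sqrt 2 * tan (thetaplus u) * tan (thetaplus w).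
Proof.
  intros Hu Hw.
  assert (Huw : vplus (C5mul u w) <> 0)
    by (rewrite vplus_mul; apply Rmult_integral_contrapositive; tauto).
  assert (Hsqrt2 : sqrt 2 <> 0) by (apply Rgt_not_eq, sqrt_lt_R0; lra).
  rewrite !tan_thetaplus, vplus_mul, rhok_mul by assumption.
  field; tauto.
Qed.

Lemma tan_psi1_mul u w :
  rhok 2 u <> 0 -> rhok 2 w <> 0 ->
  tan (psi1 (C5mul u w)) = tan (psi1 u) * tan (psi1 w).
Proof.
  intros Hu Hw.
  assert (Huw : rhok 2 (C5mul u w) <> 0)
    by (rewrite rhok_mul; apply Rmult_integral_contrapositive; tauto).
  rewrite !tan_psi1, !rhok_mul by assumption.
  field; tauto.
Qed.

Lemma root5_opp x : root5 (- x) = - root5 x.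
Proof.
  unfold root5.
  destruct (Req_EM_T (- x) 0), (Req_EM_T x 0); try lra.
  destruct (Rlt_dec 0 (- x)), (Rlt_dec 0 x); rewrite ?Ropp_involutive; lra.
Qed.

Lemma root5_mul_nonneg a b : 0 <= a -> 0 <= b -> root5 (a * b) = root5 a * root5 b.
Proof.
  intros Ha Hb; unfold root5.
  destruct (Req_EM_T (a * b) 0) as [Hab | Hab].
  - destruct (Rmult_integral _ _ Hab) as [-> | ->];
      destruct (Req_EM_T 0 0); try contradiction; ring.
  - destruct (Req_EM_T a 0), (Req_EM_T b 0); try (subst; lra).
    destruct (Rlt_dec 0 (a * b)), (Rlt_dec 0 a), (Rlt_dec 0 b); try nra.
    symmetry; apply Rpower_mult_distr; lra.
Qed.

Lemma root5_mul a b : root5 (a * b) = root5 a * root5 b.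
Proof.
  destruct (Rle_or_lt 0 a) as [Ha | Ha], (Rle_or_lt 0 b) as [Hb | Hb].
  - apply root5_mul_nonneg; assumption.
  - replace (a * b) with (- (a * - b)) by ring.
    rewrite root5_opp, root5_mul_nonneg, root5_opp by lra; ring.
  - replace (a * b) with (- (- a * b)) by ring.
    rewrite root5_opp, root5_mul_nonneg, root5_opp by lra; ring.
  - replace (a * b) with (- a * - b) by ring.
    rewrite root5_mul_nonneg, !root5_opp by lra; ring.
Qed.

Lemma amp_mul u w : amp (C5mul u w) = amp u * amp w.
Proof.
  unfold amp; rewrite <- root5_mul, vplus_mul, !rhok_mul.
  f_equal; ring.
Qed.

Theorem mainTheorem2 (u' u'' : C5) :
  let u := C5mul u' u'' in
  vplus u = vplus u' * vplus u'' /\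
  (forall k : nat, (k = 1 \/ k = 2)%nat ->
     rhok k u = rhok k u' * rhok k u'' /\
     (rhok k u' <> 0 -> rhok k u'' <> 0 ->
        exists m : Z, phik k u = phik k u' + phik k u'' + 2 * PI * IZR m) /\
     vk k u = vk k u' * vk k u'' - vtk k u' * vtk k u'' /\
     vtk k u = vk k u' * vtk k u'' + vtk k u' * vk k u'') /\
  (vplus u' <> 0 -> vplus u'' <> 0 ->
     tan (thetaplus u) = / sqrt 2 * tan (thetaplus u') * tan (thetaplus u'')) /\
  (rhok 2 u' <> 0 -> rhok 2 u'' <> 0 ->
     tan (psi1 u) = tan (psi1 u') * tan (psi1 u'')) /\
  amp u = amp u' * amp u''.
Proof.
  intros u.
  repeat split.
  - apply vplus_mul.
  - apply rhok_mul.
  - apply phik_mul.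
  - apply vk_mul.
  - apply vtk_mul.
  - apply tan_thetaplus_mul.
  - apply tan_psi1_mul.
  - apply amp_mul.
Qed.
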